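(* Let $n\ge3$ and let $Z=(z_1,\dots,z_n)$ be a non-degenerate $n$-gon. Then the 1-forms $\alpha_i=[z_{i+1}-z_i,\,dz_{i+1}+dz_i]$, $i=1,\dots,n$, are linearly independent at $Z$, and the intersection of their kernels at $Z$ equals the fiber $F(Z)$ of the dual Birkhoff distribution $\mathcal F$ at $Z$.
   Context: $[\cdot,\cdot]$ is the determinant of two plane vectors; for $z=(x,y)$, $[z_1,dz_2]$ denotes the 1-form $x_1dy_2-y_1dx_2$. Indices are cyclic. $G_n$ is the set of $n$-gons $(z_1,\dots,z_n)\in(\mathbb R^2)^n$ with $z_i\neq z_{i+1}$ for all $i$. An $n$-gon is non-degenerate if no three consecutive vertices $z_{i-1},z_i,z_{i+1}$ are collinear; the set of these is $U_n\subset G_n$. The dual Birkhoff distribution $\mathcal F$ on $G_n$: a tangent vector $W=(w_1,\dots,w_n)$ (velocities of the vertices) lies in $\mathcal F$ iff for each $i$ the induced motion of the line $z_iz_{i+1}$ is an infinitesimal rotation about the midpoint of $z_iz_{i+1}$; $\mathcal F$ is $n$-dimensional, and $W\in\mathcal F$ iff $[w_i+w_{i+1},z_{i+1}-z_i]=0$ for all $i$. *)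

From mathcomp Require Import all_boot all_order all_algebra.
Set Implicit Arguments. Unset Strict Implicit. Unset Printing Implicit Defensive.
Import Order.TTheory GRing.Theory Num.Theory.
Local Open Scope ring_scope.

Section Defs.
Variable R : realFieldType.

Definition pt := (R * R)%type.
Definition padd (u v : pt) : pt := (u.1 + v.1, u.2 + v.2).
Definition psub (u v : pt) : pt := (u.1 - v.1, u.2 - v.2).
(* [u, v] = determinant of two plane vectors *)
Definition det2 (u v : pt) : R := u.1 * v.2 - u.2 * v.1.

Variable n : nat.
Definition nxt (i : 'I_n) : 'I_n := ordS i.
Definition prv (i : 'I_n) : 'I_n := ord_pred i.

(* an n-gon: vertices z_i, i in 'I_n; a tangent vector W: velocities w_i *)
Definition in_Gn (Z : 'I_n -> pt) : Prop := forall i, Z i <> Z (nxt i).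

Definition collinear3 (a b c : pt) : Prop := det2 (psub b a) (psub c a) = 0.

Definition nondeg_gon (Z : 'I_n -> pt) : Prop :=
  in_Gn Z /\ forall i, ~ collinear3 (Z (prv i)) (Z i) (Z (nxt i)).

(* the 1-form alpha_i = [z_{i+1} - z_i, dz_{i+1} + dz_i] at Z, evaluated on W *)
Definition alphaB (Z : 'I_n -> pt) (i : 'I_n) (W : 'I_n -> pt) : R :=
  det2 (psub (Z (nxt i)) (Z i)) (padd (W (nxt i)) (W i)).

Definition dualBirkhoffF (Z : 'I_n -> pt) (W : 'I_n -> pt) : Prop :=
  forall i, det2 (padd (W i) (W (nxt i))) (psub (Z (nxt i)) (Z i)) = 0.

End Defs.

From mathcomp Require Import all_boot all_order all_algebra.
From mathcomp Require Import ring.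
Import Order.TTheory GRing.Theory Num.Theory.
Local Open Scope ring_scope.

(** For independence, test the forms on the tangent vector moving only z_j,
    with velocity z_j - z_{j-1}.  Of the alpha_i, only alpha_{j-1} and
    alpha_j see it; the first vanishes since the velocity is parallel to the
    side z_{j-1} z_j, and the second equals [z_{j+1} - z_j, z_j - z_{j-1}],
    which is non-zero because z_{j-1}, z_j, z_{j+1} are not collinear.  The
    kernels agree with F(Z) because each alpha_i is, up to sign, the i-th
    defining equation of F. *)

Section DualBirkhoffForms.
Variables (R : realFieldType) (n : nat).
Implicit Types (Z W : 'I_n -> pt R) (i j : 'I_n) (u v d : pt R).

Lemma det2_swap u v : det2 u v = - det2 v u.
Proof. by rewrite /det2; ring. Qed.

Lemma det2_self u : det2 u u = 0.
Proof. by rewrite /det2; ring. Qed.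

Lemma paddC u v : padd u v = padd v u.
Proof. by rewrite /padd addrC [u.2 + _]addrC. Qed.

Lemma nxt_eq i j : (nxt i == j) = (i == prv j).
Proof. exact: (can2_eq (@ordSK n) (@ord_predK n)). Qed.

Lemma nxt_prv j : nxt (prv j) = j.
Proof. exact: ord_predK. Qed.

Definition side Z i : pt R := psub (Z (nxt i)) (Z i).

Lemma alphaB_dualBirkhoff Z W i :
  alphaB Z i W = - det2 (padd (W i) (W (nxt i))) (side Z i).
Proof. by rewrite /alphaB det2_swap paddC. Qed.

Lemma alphaB_kernel_dualBirkhoffF Z W :
  (forall i, alphaB Z i W = 0) <-> dualBirkhoffF Z W.
Proof.
split=> ker i; move: (ker i); rewrite alphaB_dualBirkhoff.
  by move/eqP; rewrite oppr_eq0 => /eqP.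
by move=> ->; rewrite oppr0.
Qed.

Definition move_vertex j d : 'I_n -> pt R :=
  fun k => if k == j then d else (0, 0).

Lemma alphaB_move_vertex Z i j d :
  alphaB Z i (move_vertex j d) =
  (if i == prv j then det2 (side Z i) d else 0) +
  (if i == j then det2 (side Z i) d else 0).
Proof.
rewrite /alphaB /move_vertex -nxt_eq.
by case: (nxt i == j); case: (i == j); rewrite /padd /det2 /=; ring.
Qed.

Lemma sum_alphaB_move_vertex Z (c : 'I_n -> R) j d :
  \sum_(i < n) c i * alphaB Z i (move_vertex j d) =
  c (prv j) * det2 (side Z (prv j)) d + c j * det2 (side Z j) d.
Proof.
under eq_bigr => i _ do rewrite alphaB_move_vertex mulrDr !(fun_if ( *%R (c i))) mulr0.
by rewrite big_split -!big_mkcond !big_pred1_eq.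
Qed.

Lemma side_det2_neq0 Z j :
  ~ collinear3 (Z (prv j)) (Z j) (Z (nxt j)) ->
  det2 (side Z j) (side Z (prv j)) != 0.
Proof.
apply: contra_not_neq => degenerate.
rewrite /collinear3 -oppr0 -degenerate /side nxt_prv /psub /det2 /=; ring.
Qed.

Lemma alphaB_linear_independent Z :
  (forall j, ~ collinear3 (Z (prv j)) (Z j) (Z (nxt j))) ->
  forall c : 'I_n -> R,
    (forall W, \sum_(i < n) c i * alphaB Z i W = 0) -> forall j, c j = 0.
Proof.
move=> nondeg c vanish j.
have := vanish (move_vertex j (side Z (prv j))).
rewrite sum_alphaB_move_vertex det2_self mulr0 add0r => /eqP.
by rewrite mulf_eq0 (negPf (side_det2_neq0 _ _ (nondeg j))) orbF => /eqP.
Qed.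

End DualBirkhoffForms.

Theorem lemma2p2 (R : realFieldType) (n : nat) (Z : 'I_n -> pt R) :
  (3 <= n)%N -> nondeg_gon Z ->
  (* the forms alpha_1, ..., alpha_n are linearly independent at Z *)
  (forall c : 'I_n -> R,
      (forall W : 'I_n -> pt R, \sum_(i < n) c i * alphaB Z i W = 0) ->
      forall i, c i = 0)
  /\
  (* the intersection of their kernels is the fiber F(Z) *)
  (forall W : 'I_n -> pt R,
      (forall i, alphaB Z i W = 0) <-> dualBirkhoffF Z W).
Proof.
move=> _ [_ nondeg]; split.
- exact: alphaB_linear_independent.
- exact: alphaB_kernel_dualBirkhoffF.
Qed.
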